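(* Let $N=\{1,\ldots,n\}$, $\mathcal{X}=\{-1,1\}^n$, and let $P\subseteq\Delta(\mathcal{X})$ be a closed convex set with set of extreme points $\mathrm{ext}(P)$. Then: (1) A deterministic voting rule $\phi$ is $P$-robust if and only if there exists a nonzero $w\in\mathbb{R}_+^n$ such that $\dfrac{\sum_i w_ir_i(\phi,p)}{\sum_iw_i}>\dfrac12$ for all $p\in\mathrm{ext}(P)$. (2) A deterministic voting rule $\phi$ is weakly $P$-robust if and only if there exists a nonzero $w\in\mathbb{R}_+^n$ such that $\dfrac{\sum_i w_ir_i(\phi,p)}{\sum_iw_i}\geq\dfrac12$ for all $p\in\mathrm{ext}(P)$.
   Context: A deterministic voting rule is a map $\phi:\mathcal{X}\to\{-1,1\}$; $\Delta(\mathcal{X})$ is the simplex of probability distributions on $\mathcal{X}$. Responsiveness: $r_i(\phi,p)=p(\{x:\phi(x)=x_i\})$. $\phi$ is $P$-robust if for every $p\in P$ some $i\in N$ has $r_i(\phi,p)>1/2$; weakly $P$-robust if for every $p\in P$ some $i\in N$ has $r_i(\phi,p)\geq1/2$. *)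

From mathcomp Require Import all_boot all_order all_algebra.
From mathcomp Require Import all_classical all_reals all_analysis.
Set Implicit Arguments. Unset Strict Implicit. Unset Printing Implicit Defensive.
Import Order.TTheory GRing.Theory Num.Theory.
Import numFieldNormedType.Exports.
Local Open Scope ring_scope.
Local Open Scope classical_set_scope.

(* Votes/outcomes in {-1,1} are encoded by bool: true = 1, false = -1. *)
Definition profile (n : nat) : finType := {ffun 'I_n -> bool}.

Definition voting_rule (n : nat) := profile n -> bool.

(* Real-valued functions on X, with the (pointwise = Euclidean) product
   topology; distributions are elements of the simplex. *)
Notation fspace R n := {ptws profile n -> R}.

Definition in_simplex (R : realType) (n : nat) (p : fspace R n) : Prop :=
  (forall x, 0 <= p x) /\ \sum_(x : profile n) p x = 1.

Definition resp (R : realType) (n : nat) (phi : voting_rule n) (p : fspace R n)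
  (i : 'I_n) : R := \sum_(x : profile n | phi x == x i) p x.

Definition robust (R : realType) (n : nat) (P : set (fspace R n))
  (phi : voting_rule n) : Prop :=
  forall p, P p -> exists i, 1 / 2 < resp phi p i.

Definition weakly_robust (R : realType) (n : nat) (P : set (fspace R n))
  (phi : voting_rule n) : Prop :=
  forall p, P p -> exists i, 1 / 2 <= resp phi p i.

Definition convex_set (R : realType) (n : nat) (P : set (fspace R n)) : Prop :=
  forall p q (t : R), P p -> P q -> 0 <= t <= 1 ->
    P ((fun x => t * p x + (1 - t) * q x) : fspace R n).

Definition extreme_point (R : realType) (n : nat) (P : set (fspace R n))
  (p : fspace R n) : Prop :=
  P p /\ forall q r (t : R), P q -> P r -> 0 < t < 1 ->
    p = ((fun x => t * q x + (1 - t) * r x) : fspace R n) -> q = r.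

From mathcomp Require Import all_boot all_order all_algebra.
From mathcomp Require Import all_classical all_reals all_analysis.
From mathcomp Require Import ring lra.
Import Order.TTheory GRing.Theory Num.Theory.
Import numFieldNormedType.Exports.
Local Open Scope ring_scope.
Local Open Scope classical_set_scope.
Set Implicit Arguments. Unset Strict Implicit. Unset Printing Implicit Defensive.

(* The backward directions rest on the fact that a continuous affine function
   attains its minimum over the compact convex set P at an extreme point: among
   its minimizers, one of maximal Euclidean norm is extreme, by strict convexity
   of the norm.  So a weighted mean of the responsivenesses that exceeds 1/2 at
   the extreme points does so on all of P, and then some voter's does too.

   For the forward direction, minimize E(p) = sum_i max(r_i(p) - c, 0)^2 over
   P.  At a minimizer p0, robustness makes the weights u_i = max(r_i(p0) - c, 0)
   nonzero, and the first-order condition sum_i u_i (r_i(q) - r_i(p0)) >= 0 for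
   q in P gives sum_i u_i r_i(q) >= c sum_i u_i + sum_i u_i^2 > c sum_i u_i.
   The weak case follows by letting c increase to 1/2 and taking a cluster
   point of the normalized weights. *)

Lemma psumr_gt0 (R : numDomainType) (I : finType) (F : I -> R) j :
  (forall i, 0 <= F i) -> 0 < F j -> 0 < \sum_i F i.
Proof.
move=> F_ge0 Fj; apply: (lt_le_trans Fj); rewrite (bigD1 j) //= lerDl.
by apply: sumr_ge0.
Qed.

Lemma convex_comb_eq_min (R : realFieldType) (m x y t : R) : 0 < t < 1 ->
  m <= x -> m <= y -> t * x + (1 - t) * y = m -> x = m /\ y = m.
Proof. by move=> /andP[t_gt0 t_lt1] mx my; split; nra. Qed.

Lemma max0_sqrD_le (R : realDomainType) (a e : R) :
  Num.max (a + e) 0 ^+ 2 <= Num.max a 0 ^+ 2 + 2 * Num.max a 0 * e + e ^+ 2.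
Proof.
rewrite !maxEle; have [a_le0|a_gt0] := leP a 0; have [ae_le0|ae_gt0] := leP (a + e) 0.
all: rewrite ?expr2; nra.
Qed.

Lemma max0_mul_self (R : realDomainType) (a : R) : Num.max a 0 * a = Num.max a 0 ^+ 2.
Proof. by rewrite expr2 !maxEle; case: leP; rewrite ?mul0r. Qed.

(* If [S < 0], then [t := - S / (`|D| - S)] makes the quadratic negative. *)
Lemma ge0_of_quadratic_ge0 (R : realFieldType) (S D : R) :
  (forall t, 0 < t <= 1 -> 0 <= 2 * t * S + t ^+ 2 * D) -> 0 <= S.
Proof.
move=> quad_ge0; rewrite leNgt; apply/negP => S_lt0.
have DS_gt0 : 0 < `|D| - S by have := normr_ge0 D; lra.
pose t := - S / (`|D| - S).
have tDS : t * (`|D| - S) = - S by rewrite /t divfK // gt_eqF.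
have t_gt0 : 0 < t by rewrite divr_gt0 // oppr_gt0.
have t_le1 : t <= 1 by rewrite ler_pdivrMr // mul1r; have := normr_ge0 D; lra.
have := quad_ge0 t; rewrite t_gt0 t_le1 => /(_ isT).
have : t ^+ 2 * D <= t ^+ 2 * `|D| by rewrite ler_wpM2l ?sqr_ge0 ?ler_norm.
have tD : t * `|D| = - S + t * S by lra.
clearbody t.
have : t ^+ 2 * `|D| = - (t * S) + t ^+ 2 * S by rewrite expr2 -mulrA tD; ring.
have : 0 < t * (- S) * (1 + t) by rewrite !mulr_gt0 ?oppr_gt0 //; lra.
lra.
Qed.

Lemma continuous_sum (R : realType) (T : topologicalType) (I : Type) (s : seq I)
    (P : pred I) (f : I -> T -> R) :
  (forall i, P i -> continuous (f i)) ->
  continuous (fun x => \sum_(i <- s | P i) f i x).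
Proof. exact/continuous_big/add_continuous. Qed.

Lemma cluster_sub_closed (T : topologicalType) (F : set_system T) (A : set T) :
  F A -> closed A -> cluster F `<=` A.
Proof. by move=> FA /closure_id -> x; rewrite clusterE; apply. Qed.

Section Simplex.
Variables (R : realType) (U : finType).

Definition simplex : set {ptws U -> R} :=
  [set p | (forall x, 0 <= p x) /\ \sum_x p x = 1].

Lemma continuous_wsum (a : U -> R) :
  continuous (fun p : {ptws U -> R} => \sum_x p x * a x).
Proof.
apply: continuous_sum => x _ p.
apply: (@continuousM _ _ (fun p : {ptws U -> R} => p x) (fun=> a x)).
  exact: (@proj_continuous _ (fun=> R) x).
exact: cst_continuous.
Qed.

Lemma simplex_le1 p x : simplex p -> p x <= 1.
Proof.
case=> p_ge0 <-; rewrite (bigD1 x) //= lerDl.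
by apply: sumr_ge0 => y _; apply: p_ge0.
Qed.

Lemma simplex_neq0 p : simplex p -> exists x, p x != 0.
Proof.
case=> _ sum1; apply: contrapT => /forallNP p0.
have : \sum_x p x = 0 by apply: big1 => x _; apply/eqP/negPn/negP/p0.
by rewrite sum1 => /eqP; rewrite oner_eq0.
Qed.

Lemma uniform_simplex : (0 < #|U|)%N -> simplex (fun=> #|U|%:R^-1).
Proof.
move=> U_gt0; split=> [x|]; first by rewrite invr_ge0 ler0n.
by rewrite sumr_const -[_ *+ _]mulr_natr mulVf // pnatr_eq0 -lt0n.
Qed.

Lemma closed_simplex : closed simplex.
Proof.
apply: closedI.
  rewrite [X in closed X](_ : _ = \bigcap_(x in setT)
      ((fun p : {ptws U -> R} => p x) @^-1` [set y | 0 <= y])); last first.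
    by apply/seteqP; split=> p /= p_ge0 x => [_|]; apply: p_ge0.
  apply: closed_bigI => x _; apply: preimage_closed (@closed_ge _ _) => p _.
  exact: (@proj_continuous _ (fun=> R) x).
apply: (@preimage_closed _ _ (fun p : {ptws U -> R} => \sum_x p x) [set 1]).
  move=> p _; apply: continuous_sum => x _; exact: (@proj_continuous _ (fun=> R) x).
exact: closed_eq.
Qed.

Lemma compact_simplex : compact simplex.
Proof.
apply: (subclosed_compact closed_simplex
  (tychonoff (fun _ : U => @segment_compact R 0 1))).
by move=> p p_simplex x /=; rewrite in_itv /= simplex_le1 // andbT; case: p_simplex.
Qed.

End Simplex.

Section Mixture.
Variables (R : realType) (U : finType).

Definition mix (t : R) (p q : {ptws U -> R}) : {ptws U -> R} :=
  fun x => t * p x + (1 - t) * q x.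

Definition mix_affine (g : {ptws U -> R} -> R) :=
  forall t p q, g (mix t p q) = t * g p + (1 - t) * g q.

Lemma convex_set_mix (P : set {ptws U -> R}) p q t :
  convex_set P -> P p -> P q -> 0 <= t <= 1 -> P (mix t p q).
Proof.
move=> P_convex Pp Pq /andP[t_ge0 t_le1].
by apply/set_mem; apply: P_convex (Itv01 t_ge0 t_le1) _ _; apply/mem_set.
Qed.

Definition sqnorm (p : {ptws U -> R}) := \sum_x p x ^+ 2.

Lemma continuous_sqnorm : continuous sqnorm.
Proof.
apply: continuous_sum => x _ p.
have px_cont := @proj_continuous _ (fun=> R) x p.
exact: (@continuousM _ _ (fun p : {ptws U -> R} => p x) _ _ px_cont px_cont).
Qed.

Lemma sqnorm_mix t p q :
  sqnorm (mix t p q) =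
    t * sqnorm p + (1 - t) * sqnorm q - t * (1 - t) * \sum_x (p x - q x) ^+ 2.
Proof.
rewrite /sqnorm !mulr_sumr -big_split -sumrB /=.
by apply: eq_bigr => x _; rewrite /mix; ring.
Qed.

Lemma eq_of_sqnorm_mix_ge t p q : 0 < t < 1 ->
  t * sqnorm p + (1 - t) * sqnorm q <= sqnorm (mix t p q) -> p = q.
Proof.
move=> /andP[t_gt0 t_lt1]; rewrite sqnorm_mix.
set D := \sum_x _ ^+ 2 => D_le0.
have D_ge0 : 0 <= D by apply: sumr_ge0 => x _; apply: sqr_ge0.
have tt_gt0 : 0 < t * (1 - t) by rewrite mulr_gt0 // subr_gt0.
have D0 : D = 0 by nra.
apply: funext => x; apply/eqP; rewrite -subr_eq0 -sqrf_eq0; apply/eqP.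
by apply: (psumr_eq0P _ D0) => // y _; apply: sqr_ge0.
Qed.

End Mixture.

Section ExtremeMinimizer.
Variables (R : realType) (n : nat) (P : set (fspace R n)) (g : fspace R n -> R).
Hypotheses (P_compact : compact P) (g_cont : continuous g) (g_affine : mix_affine g).

Lemma exists_extreme_minimizer p : P p -> exists e, extreme_point P e /\ g e <= g p.
Proof.
move=> Pp.
have [c /set_mem Pc c_min] :=
  compact_EVT_min (ex_intro _ p Pp) P_compact (continuous_subspaceT g_cont).
have {}c_min q : P q -> g c <= g q by move=> Pq; apply/c_min/mem_set.
pose F := P `&` [set q | g q = g c].
have F_compact : compact F.
  apply: compact_closedI => //.
  by apply: (@preimage_closed _ _ g [set g c]) => [q _|]; [apply: g_cont|apply: closed_eq].
have [e /set_mem [Pe ge] e_max] :=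
  compact_EVT_max (ex_intro _ c (conj Pc erefl)) F_compact
    (continuous_subspaceT (@continuous_sqnorm R (profile n))).
have {}e_max q : F q -> sqnorm q <= sqnorm e by move=> Fq; apply/e_max/mem_set.
exists e; split; last by rewrite ge; apply: c_min.
split=> // a b t Pa Pb t01 e_mix.
have [ga gb] : g a = g c /\ g b = g c.
  by apply: (convex_comb_eq_min t01); rewrite ?c_min // -ge e_mix g_affine.
apply: (eq_of_sqnorm_mix_ge t01); rewrite (_ : mix t a b = e) //.
have := e_max a (conj Pa ga); have := e_max b (conj Pb gb).
by case/andP: t01 => t_gt0 t_lt1; nra.
Qed.

End ExtremeMinimizer.



Section Separation.
Variables (R : realType) (U : finType) (m : nat) (P : set {ptws U -> R}).
Variable r : {ptws U -> R} -> 'I_m -> R.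
Hypotheses (m_gt0 : (0 < m)%N) (P_compact : compact P) (P_convex : convex_set P).
Hypotheses (r_cont : forall i, continuous (r^~ i)) (r_affine : forall i, mix_affine (r^~ i)).

Section StrictSeparation.
Variable c : R.

Let hinge p i := Num.max (r p i - c) 0.
Let energy p := \sum_i hinge p i ^+ 2.

Let continuous_energy : continuous energy.
Proof.
apply: continuous_sum => i _ p.
have hinge_cont : {for p, continuous (hinge^~ i)}.
  apply: (@continuous_max _ _ (fun p => r p i - c) (fun=> 0)); last exact: cst_continuous.
  by apply: continuousD; [apply: r_cont | apply: cst_continuous].
exact: (continuousM hinge_cont hinge_cont).
Qed.

Let energy_minimizer_variational ps : P ps ->
  (forall q, P q -> energy ps <= energy q) ->
  forall q, P q -> 0 <= \sum_i hinge ps i * (r q i - r ps i).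
Proof.
move=> Pps ps_min q Pq; pose d i := r q i - r ps i.
change (0 <= \sum_i hinge ps i * d i).
apply: (@ge0_of_quadratic_ge0 _ _ (\sum_i d i ^+ 2)) => t /andP[t_gt0 t_le1].
have Pt : P (mix t q ps) by apply: convex_set_mix; rewrite // ltW.
have energy_mix : energy (mix t q ps) <=
    \sum_i (hinge ps i ^+ 2 + 2 * hinge ps i * (t * d i) + (t * d i) ^+ 2).
  apply: ler_sum => i _; rewrite /hinge r_affine.
  rewrite (_ : _ - c = r ps i - c + t * d i); first exact: max0_sqrD_le.
  by rewrite /d; ring.
have expand : \sum_i (hinge ps i ^+ 2 + 2 * hinge ps i * (t * d i) + (t * d i) ^+ 2) =
    energy ps + 2 * t * (\sum_i hinge ps i * d i) + t ^+ 2 * \sum_i d i ^+ 2.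
  by rewrite !big_split /= !mulr_sumr; congr (_ + _ + _); apply: eq_bigr => i _; ring.
by have := ps_min _ Pt; lra.
Qed.

Lemma strict_separation : (forall p, P p -> exists i, c < r p i) ->
  exists2 w : {ptws 'I_m -> R}, simplex w & forall q, P q -> c < \sum_i w i * r q i.
Proof.
move=> robust.
have [[p Pp]|P0] := pselect (P !=set0); last first.
  exists (fun=> #|'I_m|%:R^-1); first by apply: uniform_simplex; rewrite card_ord.
  by move=> q Pq; exfalso; apply: P0; exists q.
have [ps /set_mem Pps ps_min] :=
  compact_EVT_min (ex_intro _ p Pp) P_compact (continuous_subspaceT continuous_energy).
have {}ps_min q : P q -> energy ps <= energy q by move=> Pq; apply/ps_min/mem_set.
pose u := hinge ps; pose s := \sum_i u i.
have u_ge0 i : 0 <= u i by rewrite /u /hinge le_max lexx orbT.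
have [j cj] := robust _ Pps.
have uj_gt0 : 0 < u j by rewrite /u /hinge lt_max subr_gt0 cj.
have s_gt0 : 0 < s := psumr_gt0 u_ge0 uj_gt0.
have energy_gt0 : 0 < energy ps.
  by apply: (@psumr_gt0 _ _ _ j) => [i|]; rewrite ?sqr_ge0 ?exprn_gt0.
exists (fun i => u i / s).
  split=> [i|]; first exact: divr_ge0 (u_ge0 i) (ltW s_gt0).
  by rewrite -mulr_suml divff // gt_eqF.
move=> q Pq; under eq_bigr do rewrite mulrAC; rewrite -mulr_suml ltr_pdivlMr //.
have -> : \sum_i u i * r q i =
    \sum_i u i * (r q i - r ps i) + energy ps + c * s.
  rewrite /energy /s mulr_sumr -!big_split /=; apply: eq_bigr => i _.
  by rewrite -max0_mul_self; rewrite /u /hinge; ring.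
by have := energy_minimizer_variational Pps ps_min Pq; lra.
Qed.

End StrictSeparation.

Lemma weak_separation c : (forall p, P p -> exists i, c <= r p i) ->
  exists2 w : {ptws 'I_m -> R}, simplex w & forall q, P q -> c <= \sum_i w i * r q i.
Proof.
move=> weak.
have strict e : exists w : {ptws 'I_m -> R}, 0 < e ->
    simplex w /\ forall q, P q -> c - e < \sum_i w i * r q i.
  have [e_gt0|_] := ltP 0 e; last by exists (fun=> 0).
  have [|w w_simplex w_sep] := @strict_separation (c - e).
    by move=> p /weak [i ci]; exists i; lra.
  by exists w.
have [w w_sep] := choice strict.
have [v [v_simplex v_cluster]] : @simplex R 'I_m `&` cluster (w @ 0^'+) !=set0.
  apply: compact_simplex; suff : \forall e \near 0^'+, simplex (w e) by [].
  near=> e; have e_gt0 : 0 < e by near: e; apply: nbhs_right_gt.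
  exact: (w_sep e e_gt0).1.
exists v => // q Pq; apply/ler_addgt0Pr => eps eps_gt0.
pose A := [set x : {ptws 'I_m -> R} | c - eps <= \sum_i x i * r q i].
have A_closed : closed A.
  apply: (@preimage_closed _ _ (fun v : {ptws 'I_m -> R} => \sum_i v i * r q i)
    [set x | c - eps <= x]); last exact: closed_ge.
  by move=> ? _; apply: continuous_wsum.
have wA : \forall e \near 0^'+, A (w e).
  near=> e.
  have e_gt0 : 0 < e by near: e; apply: nbhs_right_gt.
  have e_lt : e < eps by near: e; apply: nbhs_right_lt.
  by have := (w_sep e e_gt0).2 q Pq; rewrite /A /=; lra.
by have := @cluster_sub_closed _ (w @ 0^'+) _ wA A_closed _ v_cluster; rewrite /A /=; lra.
Unshelve. all: by end_near.
Qed.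

End Separation.

Section WeightedMean.
Variables (R : realType) (U : finType) (m : nat) (r : {ptws U -> R} -> 'I_m -> R).
Variable w : 'I_m -> R.

Lemma continuous_weighted_mean : (forall i, continuous (r^~ i)) ->
  continuous (fun p => (\sum_i w i * r p i) / \sum_i w i).
Proof.
move=> r_cont p; apply: (@continuousM _ _ _ (fun=> (\sum_i w i)^-1)); last first.
  exact: cst_continuous.
apply: continuous_sum => i _ {}p.
apply: (@continuousM _ _ (fun=> w i) (r^~ i)); [exact: cst_continuous | exact: r_cont].
Qed.

Lemma affine_weighted_mean : (forall i, mix_affine (r^~ i)) ->
  mix_affine (fun p => (\sum_i w i * r p i) / \sum_i w i).
Proof.
move=> r_affine t p q; rewrite mulrA [(1 - t) * _]mulrA -mulrDl.
rewrite !mulr_sumr -big_split /=; congr (_ / _); apply: eq_bigr => i _.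
by rewrite r_affine; ring.
Qed.

End WeightedMean.

Section WeightedMeanBound.
Variables (R : realFieldType) (m : nat) (w a : 'I_m -> R) (c : R).
Hypotheses (w_ge0 : forall i, 0 <= w i) (w_neq0 : exists i, w i != 0).

Let sum_w_gt0 : 0 < \sum_i w i.
Proof.
by case: w_neq0 => j wj; apply: (@psumr_gt0 _ _ _ j); rewrite // lt_def wj w_ge0.
Qed.

Lemma exists_gt_of_weighted_mean_gt :
  c < (\sum_i w i * a i) / \sum_i w i -> exists i, c < a i.
Proof.
rewrite ltr_pdivlMr // => mean_gt; apply: contrapT => /forallNP a_le.
move: mean_gt; apply/negP; rewrite -leNgt mulr_sumr; apply: ler_sum => i _.
rewrite [c * _]mulrC; apply: ler_wpM2l => //.
by rewrite leNgt; apply/negP/a_le.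
Qed.

Lemma exists_ge_of_weighted_mean_ge :
  c <= (\sum_i w i * a i) / \sum_i w i -> exists i, c <= a i.
Proof.
rewrite ler_pdivlMr // => mean_ge; apply: contrapT => /forallNP a_lt.
have {}a_lt i : a i < c by rewrite ltNge; apply/negP/a_lt.
have [j wj] := w_neq0; have wj_gt0 : 0 < w j by rewrite lt_def wj w_ge0.
move: mean_ge; apply/negP; rewrite -ltNge mulr_sumr (bigD1 j) //= [X in _ < X](bigD1 j) //=.
apply: ltr_leD; first by rewrite [c * _]mulrC ltr_pM2l.
by apply: ler_sum => i _; rewrite [c * _]mulrC ler_wpM2l // ltW.
Qed.

End WeightedMeanBound.

Lemma continuous_resp (R : realType) n (phi : voting_rule n) i :
  continuous (fun p : fspace R n => resp phi p i).
Proof. by apply: continuous_sum => x _; apply: (@proj_continuous _ (fun=> R) x). Qed.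

Lemma affine_resp (R : realType) n (phi : voting_rule n) i :
  mix_affine (fun p : fspace R n => resp phi p i).
Proof. by move=> t p q; rewrite /resp big_split /= -!mulr_sumr. Qed.

Theorem corollary4 (R : realType) (n : nat) (n_gt0 : (0 < n)%N)
  (P : set (fspace R n))
  (P_simplex : forall p, P p -> in_simplex p)
  (P_closed : closed P) (P_convex : convex_set P) (phi : voting_rule n) :
  (robust P phi <->
     exists w : 'I_n -> R, (forall i, 0 <= w i) /\ (exists i, w i != 0) /\
       forall p, extreme_point P p ->
         1 / 2 < (\sum_i w i * resp phi p i) / (\sum_i w i)) /\
  (weakly_robust P phi <->
     exists w : 'I_n -> R, (forall i, 0 <= w i) /\ (exists i, w i != 0) /\
       forall p, extreme_point P p ->
         1 / 2 <= (\sum_i w i * resp phi p i) / (\sum_i w i)).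
Proof.
have P_compact : compact P := subclosed_compact P_closed (@compact_simplex R _) P_simplex.
have resp_cont := @continuous_resp R n phi; have resp_aff := @affine_resp R n phi.
have extreme_mean_le (w : 'I_n -> R) p : P p -> exists e, extreme_point P e /\
    (\sum_i w i * resp phi e i) / \sum_i w i <= (\sum_i w i * resp phi p i) / \sum_i w i.
  exact: (exists_extreme_minimizer P_compact
    (@continuous_weighted_mean _ _ _ _ w resp_cont) (@affine_weighted_mean _ _ _ _ w resp_aff)).
split; split.
- case/(strict_separation n_gt0 P_compact P_convex resp_cont resp_aff) => w [w_ge0 w_sum1] w_sep.
  exists w; split=> //; split; first exact: simplex_neq0.
  by move=> p [Pp _]; rewrite w_sum1 divr1; apply: w_sep.
- move=> [w [w_ge0 [w_neq0 w_ext]]] p /(extreme_mean_le w) [e [e_ext e_le]].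
  exact: exists_gt_of_weighted_mean_gt w_ge0 w_neq0 (lt_le_trans (w_ext e e_ext) e_le).
- case/(weak_separation n_gt0 P_compact P_convex resp_cont resp_aff) => w [w_ge0 w_sum1] w_sep.
  exists w; split=> //; split; first exact: simplex_neq0.
  by move=> p [Pp _]; rewrite w_sum1 divr1; apply: w_sep.
- move=> [w [w_ge0 [w_neq0 w_ext]]] p /(extreme_mean_le w) [e [e_ext e_le]].
  exact: exists_ge_of_weighted_mean_ge w_ge0 w_neq0 (le_trans (w_ext e e_ext) e_le).
Qed.
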